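(* Let $\mathcal{N}$ be a 2-step nilpotent Lie algebra over $\mathbb{R}$ and suppose $\mathcal{N}=\mathcal{N}_0\oplus\mathcal{A}$ is a direct sum of ideals with $\mathcal{A}$ abelian and $[\mathcal{N}_0,\mathcal{N}_0]=\mathfrak{z}(\mathcal{N}_0)$, the center of $\mathcal{N}_0$. Then every Lie ring automorphism $f$ of $\mathcal{N}$ has the form $f=\mu\circ g$, where $\mu$ is a central automorphism of $\mathcal{N}$ and $g$ is a Lie ring automorphism of $\mathcal{N}$ with $g(\mathcal{N}_0)=\mathcal{N}_0$ and $g(Y)=Y$ for all $Y\in\mathcal{A}$. In particular, if $\mathcal{N}_0$ satisfies the partial automatic continuity, then so does $\mathcal{N}$.
   Context: A Lie ring automorphism of a real Lie algebra is a bijective additive map preserving the bracket (not necessarily $\mathbb{R}$-linear). A central automorphism is a Lie ring automorphism $\mu$ with $\mu(x)-x$ in the center for all $x$. Field automorphisms: if a Lie algebra is a direct sum of ideals $\mathcal{N}_1\oplus\cdots\oplus\mathcal{N}_k$, for each $\mathcal{N}_i$ that is the realification of a complex Lie algebra choose a $\mathbb{C}$-basis $e_1,\dots,e_m$ and a field automorphism $\varphi$ of $\mathbb{C}$ fixing the structure constants and set $\sigma_i(\sum x_le_l)=\sum\varphi(x_l)e_l$, otherwise $\sigma_i=\mathrm{id}$; $\sigma_1\times\cdots\times\sigma_k$ is a field automorphism. A real nilpotent Lie algebra satisfies the partial automatic continuity if every Lie ring automorphism is a composition $\mu\circ\overline{f}\circ\sigma$ of a central automorphism $\mu$, an $\mathbb{R}$-linear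 Lie algebra automorphism $\overline{f}$ and a field automorphism $\sigma$. *)

(* Real Lie algebras are modelled as a finite-dimensional
   real vector space V : vectType R (R : realType, i.e. the reals) with a
   bracket br; ideals and subalgebras are subspaces {vspace V}.  All notions
   (automorphisms, center, partial automatic continuity) are defined relative
   to a subspace U of V, so that they apply both to N (U = fullv) and to the
   ideal N0 (U = N0) viewed as a Lie algebra in its own right. *)
From HB Require Import structures.
From mathcomp Require Import all_boot all_order all_algebra.
From mathcomp Require Import reals complex.
Set Implicit Arguments. Unset Strict Implicit. Unset Printing Implicit Defensive.
Import Order.TTheory GRing.Theory Num.Theory.
Local Open Scope ring_scope.

Section Lie.
Variables (R : realType) (V : vectType R) (br : V -> V -> V).

Definition is_lie_bracket : Prop :=
  [/\ forall (a : R) x y z, br (a *: x + y) z = a *: br x z + br y z,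
      forall (a : R) x y z, br x (a *: y + z) = a *: br x y + br x z,
      forall x, br x x = 0 &
      forall x y z, br x (br y z) + br y (br z x) + br z (br x y) = 0].

Definition two_step_nilpotent : Prop :=
  (forall x y z, br x (br y z) = 0) /\ exists x y, br x y != 0.

Definition is_ideal_of (U I : {vspace V}) : Prop :=
  (I <= U)%VS /\ forall x y, x \in U -> y \in I -> br x y \in I.

Definition abelian_sub (A : {vspace V}) : Prop :=
  forall x y, x \in A -> y \in A -> br x y = 0.

Definition in_center (U : {vspace V}) (x : V) : Prop :=
  x \in U /\ forall y, y \in U -> br x y = 0.

(* x lies in the derived algebra [U,U] (the span of all brackets; by
   bilinearity the real span equals the set of finite sums of brackets) *)
Definition in_derived (U : {vspace V}) (x : V) : Prop :=
  exists n (a b : 'I_n -> V),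
    (forall i, a i \in U /\ b i \in U) /\ x = \sum_(i < n) br (a i) (b i).

(* Lie ring automorphism of U: bijective additive bracket-preserving map
   U -> U (represented by a map V -> V, only its values on U matter) *)
Definition lie_ring_aut (U : {vspace V}) (f : V -> V) : Prop :=
  [/\ forall x, x \in U -> f x \in U,
      forall x y, x \in U -> y \in U -> f x = f y -> x = y,
      forall y, y \in U -> exists2 x, x \in U & f x = y,
      forall x y, x \in U -> y \in U -> f (x + y) = f x + f y &
      forall x y, x \in U -> y \in U -> f (br x y) = br (f x) (f y)].

Definition central_aut (U : {vspace V}) (mu : V -> V) : Prop :=
  lie_ring_aut U mu /\ forall x, x \in U -> in_center U (mu x - x).

Definition lin_lie_aut (U : {vspace V}) (f : V -> V) : Prop :=
  lie_ring_aut U f /\ forall (a : R) x, x \in U -> f (a *: x) = a *: f x.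



Definition cscale (J : V -> V) (z : R[i]) (x : V) : V :=
  (@complex.Re R z) *: x + (@complex.Im R z) *: J x.

Definition csum (J : V -> V) m (e : 'I_m -> V) (c : 'I_m -> R[i]) : V :=
  \sum_(l < m) cscale J (c l) (e l).

(* J makes the real Lie algebra I the realification of a complex Lie
   algebra: J is R-linear on I, J^2 = -1, and the bracket is C-bilinear *)
Definition complex_structure (I : {vspace V}) (J : V -> V) : Prop :=
  [/\ forall x, x \in I -> J x \in I,
      forall (a : R) x y, x \in I -> y \in I -> J (a *: x + y) = a *: J x + J y,
      forall x, x \in I -> J (J x) = - x &
      forall x y, x \in I -> y \in I -> br (J x) y = J (br x y)].

Definition cbasis (I : {vspace V}) (J : V -> V) m (e : 'I_m -> V) : Prop :=
  [/\ forall l, e l \in I,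
      forall x, x \in I -> (exists c, x = csum J e c) &
      forall c c', csum J e c = csum J e c' -> forall l, c l = c' l].

Definition field_aut_piece (I : {vspace V}) (s : V -> V) : Prop :=
  (forall x, x \in I -> s x = x) \/
  exists (J : V -> V) (m : nat) (e : 'I_m -> V) (phi : {rmorphism R[i] -> R[i]})
         (gam : 'I_m -> 'I_m -> 'I_m -> R[i]),
    [/\ complex_structure I J, cbasis I J e, bijective phi,
        (forall l l', br (e l) (e l') = csum J e (gam l l')) /\
          (forall l l' p, phi (gam l l' p) = gam l l' p) &
        forall c, s (csum J e c) = csum J e (fun l => phi (c l))].

Definition field_aut (U : {vspace V}) (sigma : V -> V) : Prop :=
  exists (k : nat) (Ns : 'I_k -> {vspace V}) (sg : 'I_k -> V -> V),
    [/\ (\sum_(i < k) Ns i)%VS = U,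
        directv (\sum_(i < k) Ns i),
        forall i, is_ideal_of U (Ns i),
        forall i, field_aut_piece (Ns i) (sg i) &
        forall xs : 'I_k -> V, (forall i, xs i \in Ns i) ->
          sigma (\sum_(i < k) xs i) = \sum_(i < k) sg i (xs i)].

Definition partial_auto_continuity (U : {vspace V}) : Prop :=
  forall f, lie_ring_aut U f ->
    exists mu fb sigma,
      [/\ central_aut U mu, lin_lie_aut U fb, field_aut U sigma &
          forall x, x \in U -> f x = mu (fb (sigma x))].

End Lie.

(* Write [x = pN x + pA x] for the decomposition [N = N0 + A].  As [A] is
   central and brackets only see [N0]-components, the ideal
   [z(N0) = [N0,N0] = [N,N]] is also [N0] intersected with the center of
   [N]; hence every Lie ring automorphism [f] of [N] maps central elements of
   [N0] into [N0].  It follows that [pN \o f] is a Lie ring automorphism of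
   [N0]: an element of its kernel is sent by [f] into [A], so it is central,
   so its image lies in [N0 :&: A = 0]; and the defect [pN (f a)], [a \in A],
   is central in [N0], hence the image under [f] of a central element of
   [N0].  Extending [pN \o f] by the identity of [A] gives [g], and
   [f x - g x] is central, so [f \o g^-1] is a central automorphism.  For the
   second claim, the factorisation of [g] on [N0] extends by the identity of
   [A], adjoining [A] as one more ideal with trivial field automorphism. *)

From HB Require Import structures.
From mathcomp Require Import all_boot all_order all_algebra.
From mathcomp Require Import reals complex.
Set Implicit Arguments. Unset Strict Implicit. Unset Printing Implicit Defensive.
Import GRing.Theory.
Local Open Scope ring_scope.

Lemma inj_surj_bij (T : choiceType) (T' : eqType) (f : T -> T') :
  injective f -> (forall y, exists x, f x = y) -> bijective f.
Proof.
move=> fI fS; have fSb y : exists x, f x == y by have [x /eqP] := fS y; exists x.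
exists (fun y => xchoose (fSb y)) => [x | y]; last exact/eqP/(xchooseP (fSb y)).
exact/fI/eqP/(xchooseP (fSb (f x))).
Qed.

Section AdditiveMap.
Variables (U W : zmodType) (f : U -> W).
Hypothesis fD : {morph f : x y / x + y}.

Lemma additive_map0 : f 0 = 0.
Proof. by apply: (addrI (f 0)); rewrite -fD !addr0. Qed.

Lemma additive_mapN : {morph f : x / - x}.
Proof. by move=> x; apply: (addIr (f x)); rewrite -fD !addNr additive_map0. Qed.

Lemma additive_mapB : {morph f : x y / x - y}.
Proof. by move=> x y; rewrite fD additive_mapN. Qed.

End AdditiveMap.

Section LieRingAutomorphisms.
Variables (R : realType) (V : vectType R) (br : V -> V -> V).
Hypothesis br_lie : is_lie_bracket br.

Lemma brDl x y z : br (x + y) z = br x z + br y z.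
Proof. by case: br_lie => brlin _ _ _; have := brlin 1 x y z; rewrite !scale1r. Qed.

Lemma brDr x y z : br x (y + z) = br x y + br x z.
Proof. by case: br_lie => _ brlin _ _; have := brlin 1 x y z; rewrite !scale1r. Qed.

Lemma br0l y : br 0 y = 0.
Proof. exact: (@additive_map0 _ _ (br^~ y) (fun x z => brDl x z y)). Qed.

Lemma brNl x y : br (- x) y = - br x y.
Proof. exact: (@additive_mapN _ _ (br^~ y) (fun x z => brDl x z y)). Qed.

Lemma br_antisym x y : br x y = - br y x.
Proof.
case: br_lie => _ _ brxx _; apply/eqP; rewrite -addr_eq0.
by have := brxx (x + y); rewrite brDl !brDr !brxx add0r addr0 => ->.
Qed.

Lemma in_center_fullP x : in_center br fullv x <-> forall y, br x y = 0.
Proof. by split=> [[_ cx] y | cx]; [exact/cx/memvf | split=> [|y _]; rewrite ?memvf]. Qed.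

Lemma in_center_fullD x y :
  in_center br fullv x -> in_center br fullv y -> in_center br fullv (x + y).
Proof.
move=> /in_center_fullP cx /in_center_fullP cy; apply/in_center_fullP => z.
by rewrite brDl cx cy addr0.
Qed.

Lemma in_center_fullN x : in_center br fullv x -> in_center br fullv (- x).
Proof.
by move=> /in_center_fullP cx; apply/in_center_fullP => z; rewrite brNl cx oppr0.
Qed.

Lemma lie_ring_aut_fullP f : lie_ring_aut br fullv f <->
  [/\ bijective f, {morph f : x y / x + y} & {morph f : x y / br x y}].
Proof.
split=> [[_ fI fS fD fM] | [[g fK gK] fD fM]].
  split=> [|x y|x y]; [|exact: fD (memvf x) (memvf y)|exact: fM (memvf x) (memvf y)].
  apply: inj_surj_bij => [x y|y]; first exact: fI (memvf x) (memvf y).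
  by have [x _ <-] := fS y (memvf y); exists x.
split=> [x _|x y _ _|y _|x y _ _|x y _ _]; rewrite ?memvf //; first exact: can_inj.
by exists (g y); rewrite ?memvf.
Qed.

Lemma lie_ring_aut_restrict (U : {vspace V}) f : lie_ring_aut br fullv f ->
  (forall x, x \in U -> f x \in U) ->
  (forall y, y \in U -> exists2 x, x \in U & f x = y) -> lie_ring_aut br U f.
Proof.
move=> /lie_ring_aut_fullP[[g fK _] fD fM] fU fS.
by split=> // x y _ _ /(can_inj fK).
Qed.

Lemma lie_ring_aut_comp f g : lie_ring_aut br fullv f -> lie_ring_aut br fullv g ->
  lie_ring_aut br fullv (f \o g).
Proof.
move=> /lie_ring_aut_fullP[fB fD fM] /lie_ring_aut_fullP[gB gD gM].
apply/lie_ring_aut_fullP; split=> [|x y|x y] /=; first exact: bij_comp.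
  by rewrite gD.
by rewrite gM.
Qed.

Lemma lie_ring_aut_inv f g : lie_ring_aut br fullv f -> cancel f g -> cancel g f ->
  lie_ring_aut br fullv g.
Proof.
move=> /lie_ring_aut_fullP[_ fD fM] fK gK; apply/lie_ring_aut_fullP.
split=> [|x y|x y]; first by exists f.
  by apply: (can_inj fK); rewrite fD !gK.
by apply: (can_inj fK); rewrite fM !gK.
Qed.

Lemma lie_ring_aut_center f x : lie_ring_aut br fullv f ->
  in_center br fullv (f x) <-> in_center br fullv x.
Proof.
move=> /lie_ring_aut_fullP[[g fK gK] fD fM].
have f0 := additive_map0 fD.
split=> /in_center_fullP cx; apply/in_center_fullP => y.
  by apply: (can_inj fK); rewrite fM cx f0.
by rewrite -(gK y) -fM cx f0.
Qed.

Lemma in_derived_fullv U x : in_derived br U x -> in_derived br fullv x.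
Proof. by case=> n [a [b [_ ->]]]; exists n, a, b; split=> // i; rewrite !memvf. Qed.

Lemma lie_ring_aut_derived f x : lie_ring_aut br fullv f ->
  in_derived br fullv x -> in_derived br fullv (f x).
Proof.
move=> /lie_ring_aut_fullP[_ fD fM] [n [a [b [_ ->]]]].
exists n, (f \o a), (f \o b); split=> [i|]; first by rewrite !memvf.
by rewrite (big_morph f fD (additive_map0 fD)); apply: eq_bigr => i _; rewrite fM.
Qed.

Lemma central_aut_comp m1 m2 : central_aut br fullv m1 -> central_aut br fullv m2 ->
  central_aut br fullv (m1 \o m2).
Proof.
move=> [m1_aut m1c] [m2_aut m2c]; split=> [|x _]; first exact: lie_ring_aut_comp.
have -> : (m1 \o m2) x - x = (m1 (m2 x) - m2 x) + (m2 x - x) by rewrite addrA subrK.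
by apply: in_center_fullD; [apply: m1c | apply: m2c]; rewrite memvf.
Qed.

Lemma central_aut_div f g g' :
  lie_ring_aut br fullv f -> lie_ring_aut br fullv g -> cancel g g' -> cancel g' g ->
  (forall x, in_center br fullv (f x - g x)) -> central_aut br fullv (f \o g').
Proof.
move=> f_aut g_aut gK g'K cfg; split=> [|y _]; last by rewrite /= -{2}(g'K y).
exact: lie_ring_aut_comp f_aut (lie_ring_aut_inv g_aut gK g'K).
Qed.

End LieRingAutomorphisms.

Section FieldAutomorphisms.
Variables (R : realType) (V : vectType R) (br : V -> V -> V).

Lemma field_aut_piece_mem I s x : field_aut_piece br I s -> x \in I -> s x \in I.
Proof.
case=> [s_id xI | [J [m [e [phi [gam [[JI _ _ _] [eI e_span _] _ _ s_e]]]]]] xI].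
  by rewrite s_id.
have [c ->] := e_span x xI; rewrite s_e; apply: memv_suml => l _.
by rewrite /cscale memvD ?memvZ ?JI.
Qed.

Lemma field_aut_mem U s x : field_aut br U s -> x \in U -> s x \in U.
Proof.
case=> k [Ns [sg [<- _ _ pieces s_sum]]] /memv_sumP[xs xsN ->].
rewrite s_sum => [|i]; last exact: xsN.
by apply: memv_sumr => i _; apply: field_aut_piece_mem (pieces i) (xsN i _).
Qed.

End FieldAutomorphisms.

Section DirectSum.
Variables (K : fieldType) (V : vectType K) (N0 A : {vspace V}).
Hypotheses (sumNA : (N0 + A)%VS = fullv) (dirNA : directv (N0 + A)).

Local Notation pN := (daddv_pi N0 A).
Local Notation pA := (daddv_pi A N0).

Lemma capNA : (N0 :&: A = 0)%VS. Proof. exact/directv_addP. Qed.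

Lemma memNA_eq0 x : x \in N0 -> x \in A -> x = 0.
Proof. by move=> xN xA; apply/eqP; rewrite -memv0 -capNA memv_cap xN. Qed.

Lemma projNA_add x : pN x + pA x = x.
Proof. by apply: daddv_pi_add; rewrite ?capNA ?sumNA ?memvf. Qed.

Lemma projN_id n : n \in N0 -> pN n = n.
Proof. exact/daddv_pi_id/capNA. Qed.

Lemma projA_id a : a \in A -> pA a = a.
Proof. by apply/daddv_pi_id; rewrite capvC capNA. Qed.

Lemma projN_A a : a \in A -> pN a = 0.
Proof.
move=> aA; have := projNA_add a; rewrite projA_id // => /(canRL (addrK a)).
by rewrite subrr.
Qed.

Lemma projA_N n : n \in N0 -> pA n = 0.
Proof.
move=> nN; have := projNA_add n; rewrite projN_id // => /(canRL (addKr n)).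
by rewrite addNr.
Qed.

Lemma projN_add n a : n \in N0 -> a \in A -> pN (n + a) = n.
Proof. by move=> nN aA; rewrite linearD /= projN_id // projN_A // addr0. Qed.

Lemma projA_add n a : n \in N0 -> a \in A -> pA (n + a) = a.
Proof. by move=> nN aA; rewrite linearD /= projA_N // projA_id // add0r. Qed.

End DirectSum.

Section SplitAbelianFactor.
Variables (R : realType) (V : vectType R) (br : V -> V -> V) (N0 A : {vspace V}).
Hypotheses (br_lie : is_lie_bracket br)
  (sumNA : (N0 + A)%VS = fullv) (dirNA : directv (N0 + A))
  (idealN0 : is_ideal_of br fullv N0) (idealA : is_ideal_of br fullv A)
  (abelianA : abelian_sub br A).

Local Notation pN := (daddv_pi N0 A).
Local Notation pA := (daddv_pi A N0).
Local Notation projNA_add := (projNA_add sumNA dirNA).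
Local Notation projN_id := (projN_id dirNA).
Local Notation projA_N := (projA_N sumNA dirNA).
Local Notation projN_A := (projN_A sumNA dirNA).
Local Notation projN_add := (projN_add sumNA dirNA).
Local Notation projA_add := (projA_add sumNA dirNA).

Lemma br_N0A n a : n \in N0 -> a \in A -> br n a = 0.
Proof.
move=> nN aA; apply: (memNA_eq0 dirNA); last exact: idealA.2 (memvf n) aA.
by rewrite br_antisym // memvN; apply: idealN0.2 (memvf a) nN.
Qed.

Lemma br_projN x y : br x y = br (pN x) (pN y).
Proof.
rewrite -{1}(projNA_add x) -{1}(projNA_add y) !(brDl br_lie, brDr br_lie).
rewrite (abelianA (memv_pi _ _ _) (memv_pi _ _ _)) [br (pA x) _]br_antisym //.
by rewrite !(@br_N0A (pN _) (pA _)) ?memv_pi // oppr0 !addr0.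
Qed.

Lemma br_memN0 x y : br x y \in N0.
Proof. by rewrite br_projN; apply: idealN0.2 (memvf _) (memv_pi _ _ _). Qed.

Lemma in_center_A a : a \in A -> in_center br fullv a.
Proof. by move=> aA; apply/in_center_fullP => y; rewrite br_projN projN_A // br0l. Qed.

Lemma in_center_N0_fullv n : in_center br N0 n -> in_center br fullv n.
Proof.
case=> nN cn; apply/in_center_fullP => y.
by rewrite br_projN projN_id // cn ?memv_pi.
Qed.

Lemma in_center_projN z : in_center br fullv z -> in_center br fullv (pN z).
Proof.
move=> /in_center_fullP cz; apply/in_center_fullP => y.
by rewrite br_projN projN_id ?memv_pi // -br_projN cz.
Qed.

Lemma in_derived_memN0 x : in_derived br fullv x -> x \in N0.
Proof. by case=> n [a [b [_ ->]]]; apply: memv_suml => i _; apply: br_memN0. Qed.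

Lemma is_ideal_of_fullv I : is_ideal_of br N0 I -> is_ideal_of br fullv I.
Proof.
case=> IN0 idI; split=> [|x y _ yI]; first exact: subvf.
by rewrite br_projN (projN_id (subvP IN0 y yI)); apply: idI (memv_pi _ _ _) yI.
Qed.

Definition extend (h : V -> V) x := h (pN x) + pA x.

Section Extend.
Variable h : V -> V.
Hypothesis hN0 : forall n, n \in N0 -> h n \in N0.

Lemma extend_projN x : pN (extend h x) = h (pN x).
Proof. by rewrite projN_add ?hN0 ?memv_pi. Qed.

Lemma extend_projA x : pA (extend h x) = pA x.
Proof. by rewrite projA_add ?hN0 ?memv_pi. Qed.

End Extend.

Lemma extend_N0 h n : n \in N0 -> extend h n = h n.
Proof. by move=> nN; rewrite /extend projN_id // projA_N // addr0. Qed.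

Lemma extend_comp h k x : (forall n, n \in N0 -> k n \in N0) ->
  extend h (extend k x) = extend (h \o k) x.
Proof. by move=> kN0; rewrite /extend extend_projN // extend_projA. Qed.

Lemma extend_aut h : lie_ring_aut br N0 h -> lie_ring_aut br fullv (extend h).
Proof.
case=> hN0 hI hS hD hM; apply/lie_ring_aut_fullP; split=> [|x y|x y].
- apply: inj_surj_bij => [x y eq_xy|y].
    have eqN : pN x = pN y.
      by apply: hI; rewrite ?memv_pi // -(extend_projN hN0 x) eq_xy extend_projN.
    have eqA : pA x = pA y by rewrite -(extend_projA hN0 x) eq_xy extend_projA.
    by rewrite -(projNA_add x) -(projNA_add y) eqN eqA.
  have [n nN hn] := hS _ (memv_pi N0 A y); exists (n + pA y).
  by rewrite /extend projN_add ?projA_add ?memv_pi // hn projNA_add.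
- by rewrite /extend !linearD /= hD ?memv_pi // addrACA.
rewrite extend_N0 ?br_memN0 // [RHS]br_projN !(extend_projN hN0).
by rewrite br_projN hM ?memv_pi.
Qed.

Lemma extend_central h : central_aut br N0 h -> central_aut br fullv (extend h).
Proof.
case=> h_aut hc; split=> [|x _]; first exact: extend_aut.
have -> : extend h x - x = h (pN x) - pN x.
  by rewrite /extend -{3}(projNA_add x) opprD addrACA subrr addr0.
by apply: in_center_N0_fullv; apply: hc; apply: memv_pi.
Qed.

Lemma extend_lin h : lin_lie_aut br N0 h -> lin_lie_aut br fullv (extend h).
Proof.
case=> h_aut hZ; split=> [|a x _]; first exact: extend_aut.
by rewrite /extend !linearZ /= hZ ?memv_pi // scalerDr.
Qed.

Lemma extend_field s : field_aut br N0 s -> field_aut br fullv (extend s).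
Proof.
case=> k [Ns [sg [sumNs dirNs idealNs pieces s_sum]]].
pose Ns' (i : 'I_k.+1) := if unlift ord0 i is Some j then Ns j else A.
pose sg' (i : 'I_k.+1) := if unlift ord0 i is Some j then sg j else id.
have Ns'0 : Ns' ord0 = A by rewrite /Ns' unlift_none.
have Ns'S j : Ns' (lift ord0 j) = Ns j by rewrite /Ns' liftK.
have sumNs' : (\sum_(i < k.+1) Ns' i)%VS = fullv.
  by rewrite big_ord_recl Ns'0; under eq_bigr do rewrite Ns'S; rewrite sumNs addvC.
exists k.+1, Ns', sg'; split=> // [|i|i|xs xsN].
- (* [\dim fullv = \dim A + \dim N0 = \dim A + \sum_j \dim (Ns j)] *)
  move: dirNs; rewrite !directvE /= sumNs' -sumNA (dimv_disjoint_sum (capNA dirNA)).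
  rewrite sumNs big_ord_recl Ns'0 => /eqP ->.
  by rewrite addnC eqn_add2l; apply/eqP/eq_bigr => j _; rewrite Ns'S.
- rewrite /Ns'; case: (unlift ord0 i) => [j|]; last exact: idealA.
  exact: is_ideal_of_fullv (idealNs j).
- by rewrite /Ns' /sg'; case: (unlift ord0 i) => [j|]; [exact: pieces | left].
have aA : xs ord0 \in A by rewrite -Ns'0.
have xsS j : xs (lift ord0 j) \in Ns j by rewrite -Ns'S.
have nN : \sum_(j < k) xs (lift ord0 j) \in N0 by rewrite -sumNs; apply: memv_sumr.
rewrite big_ord_recl [xs ord0 + _]addrC /extend projN_add // projA_add //.
rewrite s_sum // big_ord_recl /sg' unlift_none addrC; congr (_ + _).
by apply: eq_bigr => j _; rewrite liftK.
Qed.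

Section CenterIsDerived.
Hypothesis center_derived : forall n, in_center br N0 n -> in_derived br N0 n.

Lemma lie_ring_aut_center_N0 f n : lie_ring_aut br fullv f ->
  n \in N0 -> in_center br fullv n -> f n \in N0.
Proof.
move=> f_aut nN [_ cn]; apply/in_derived_memN0/lie_ring_aut_derived => //.
by apply/in_derived_fullv/center_derived; split=> // y _; apply/cn/memvf.
Qed.

Section ProjectedAutomorphism.
Variable f : V -> V.
Hypothesis f_aut : lie_ring_aut br fullv f.

Lemma projN_aut_inj n : n \in N0 -> pN (f n) = 0 -> n = 0.
Proof.
move=> nN fn0; have /lie_ring_aut_fullP[[g fK _] fD _] := f_aut.
have fnA : f n \in A by rewrite -(projNA_add (f n)) fn0 add0r memv_pi.
have cn : in_center br fullv n.
  by apply/(lie_ring_aut_center _ f_aut)/in_center_A.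
have fn_eq0 : f n = 0 := memNA_eq0 dirNA (lie_ring_aut_center_N0 f_aut nN cn) fnA.
by apply: (can_inj fK); rewrite fn_eq0 (additive_map0 fD).
Qed.

Lemma projN_aut : lie_ring_aut br N0 (pN \o f).
Proof.
have /lie_ring_aut_fullP[[g fK gK] fD fM] := f_aut.
split=> [x _|x y xN yN /= eq_xy|y yN|x y _ _|x y _ _] /=; first exact: memv_pi.
- apply/eqP; rewrite -subr_eq0; apply/eqP/projN_aut_inj; first exact: memvB.
  by rewrite (additive_mapB fD) linearB /= eq_xy subrr.
- pose m := pN (f (pA (g y))).
  have cm : in_center br fullv m.
    by apply/in_center_projN/(lie_ring_aut_center _ f_aut)/in_center_A/memv_pi.
  have g_aut := lie_ring_aut_inv f_aut fK gK.
  have gmN : g m \in N0.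
    by apply: (lie_ring_aut_center_N0 g_aut) cm; apply: memv_pi.
  exists (pN (g y) + g m); first by rewrite memvD ?memv_pi.
  rewrite fD linearD /= gK (projN_id (memv_pi _ _ _)) -linearD -fD projNA_add gK.
  exact: projN_id.
- by rewrite fD linearD.
by rewrite fM projN_id ?br_memN0 // br_projN.
Qed.

Lemma in_center_sub_extend x : in_center br fullv (f x - extend (pN \o f) x).
Proof.
have /lie_ring_aut_fullP[_ fD _] := f_aut.
rewrite /extend -{1}(projNA_add x) fD -{1}(projNA_add (f (pN x))) /=.
rewrite -(addrA (pN _)) [pN _ + _]addrC addrKA -addrA.
have cA y : in_center br fullv (pA y) := in_center_A (memv_pi A N0 y).
apply: (in_center_fullD br_lie); first exact: cA.
apply: (in_center_fullD br_lie); last exact/(in_center_fullN br_lie)/cA.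
exact/(lie_ring_aut_center _ f_aut)/cA.
Qed.

End ProjectedAutomorphism.

Lemma lie_ring_aut_decomposition f : lie_ring_aut br fullv f ->
  exists mu g,
    [/\ central_aut br fullv mu,
        lie_ring_aut br fullv g,
        (forall x, x \in N0 -> g x \in N0)
          /\ (forall y, y \in N0 -> exists2 x, x \in N0 & g x = y),
        (forall y, y \in A -> g y = y) &
        (forall x, f x = mu (g x))].
Proof.
move=> f_aut; have /lie_ring_aut_fullP[_ fD _] := f_aut.
have h_aut := projN_aut f_aut; have [_ _ hS _ _] := h_aut.
have g_aut := extend_aut h_aut.
have /lie_ring_aut_fullP[[g' gK g'K] _ _] := g_aut.
exists (f \o g'), (extend (pN \o f)); split=> //.
- exact: central_aut_div f_aut g_aut gK g'K (in_center_sub_extend f_aut).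
- split=> [x xN | y /hS[x xN <-]]; first by rewrite extend_N0 ?memv_pi.
  by exists x; rewrite ?extend_N0.
- by move=> a aA; rewrite /extend projN_A //= (additive_map0 fD) linear0 add0r projA_id.
by move=> x /=; rewrite gK.
Qed.

Lemma partial_auto_continuity_extend :
  partial_auto_continuity br N0 -> partial_auto_continuity br fullv.
Proof.
move=> pacN0 f f_aut.
have [mu [g [mu_c g_aut [gN0 gS] gA f_eq]]] := lie_ring_aut_decomposition f_aut.
have /lie_ring_aut_fullP[_ gD _] := g_aut.
have [mu0 [fb0 [s0 [mu0_c fb0_lin s0_field g_eq]]]] :=
  pacN0 g (lie_ring_aut_restrict g_aut gN0 gS).
have [[mu0N0 _ _ _ _] _] := mu0_c; have [[fb0N0 _ _ _ _] _] := fb0_lin.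
have s0N0 n : n \in N0 -> s0 n \in N0 := field_aut_mem s0_field.
exists (mu \o extend mu0), (extend fb0), (extend s0); split.
- exact: central_aut_comp mu_c (extend_central mu0_c).
- exact: extend_lin.
- exact: extend_field.
move=> x _; rewrite f_eq /=; congr mu.
rewrite (extend_comp _ _ s0N0) extend_comp => [|n nN]; last exact/fb0N0/s0N0.
by rewrite -{1}(projNA_add x) gD (gA _ (memv_pi A N0 x)) (g_eq _ (memv_pi N0 A x)).
Qed.

End CenterIsDerived.

End SplitAbelianFactor.

Theorem proposition3p4 (R : realType) (V : vectType R) (br : V -> V -> V)
    (N0 A : {vspace V}) :
  is_lie_bracket br ->
  two_step_nilpotent br ->
  (N0 + A)%VS = fullv ->
  directv (N0 + A) ->
  is_ideal_of br fullv N0 ->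
  is_ideal_of br fullv A ->
  abelian_sub br A ->
  (forall x, in_derived br N0 x <-> in_center br N0 x) ->
  (forall f, lie_ring_aut br fullv f ->
     exists mu g,
       [/\ central_aut br fullv mu,
           lie_ring_aut br fullv g,
           (forall x, x \in N0 -> g x \in N0)
             /\ (forall y, y \in N0 -> exists2 x, x \in N0 & g x = y),
           (forall y, y \in A -> g y = y) &
           (forall x, f x = mu (g x))])
  /\ (partial_auto_continuity br N0 -> partial_auto_continuity br fullv).
Proof.
move=> br_lie _ sumNA dirNA idealN0 idealA abelianA derived_center.
have center_derived n : in_center br N0 n -> in_derived br N0 n.
  exact: (proj2 (derived_center n)).
split; first exact: lie_ring_aut_decomposition.
exact: (partial_auto_continuity_extend br_lie sumNA dirNA idealN0 idealA abelianA).
Qed.
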